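(* For every integer $k \geq 1$, let $\mathcal{Q}(k)$ denote the greatest common divisor of all the sums $\sum_{i=1}^{k} Q_{n+i}$, $n \geq 0$. Then $$\mathcal{Q}(k) = \begin{cases} 2P_{k/2}, & \text{if } k \equiv 0 \pmod 4;\\ 2Q_{k/2}, & \text{if } k \equiv 2 \pmod 4;\\ 1, & \text{if } k \equiv 1,3 \pmod 4.\end{cases}$$
   Context: The Pell sequence $(P_n)_{n\ge0}$ is defined by $P_0=0$, $P_1=1$, $P_n = 2P_{n-1}+P_{n-2}$. The associated Pell sequence $(Q_n)_{n\ge0}$ is defined by $Q_0=1$, $Q_1=1$, $Q_n=2Q_{n-1}+Q_{n-2}$. *)

From mathcomp Require Import all_boot.
Set Implicit Arguments. Unset Strict Implicit. Unset Printing Implicit Defensive.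

Fixpoint pell (n : nat) : nat :=
  match n with
  | 0 => 0
  | 1 => 1
  | (m.+1 as p).+1 => 2 * pell p + pell m
  end.

Fixpoint apell (n : nat) : nat :=
  match n with
  | 0 => 1
  | 1 => 1
  | (m.+1 as p).+1 => 2 * apell p + apell m
  end.

Definition is_gcd_family (d : nat) (f : nat -> nat) : Prop :=
  (forall n, d %| f n) /\ (forall e, (forall n, e %| f n) -> e %| d).

Definition apell_window (k n : nat) : nat := \sum_(1 <= i < k.+1) apell (n + i).

(* The window telescopes: P_{i+1} = P_i + Q_i, so Q_{n+1} + ... + Q_{n+k} = P_{n+k+1} - P_{n+1}.
   For k = 2h the addition formulas together with Q_h^2 - 2 P_h^2 = (-1)^h turn this difference
   into 2 P_h Q_{n+h+1} (h even) or 2 Q_h P_{n+h+1} (h odd); consecutive terms of P and of Q are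
   coprime, so the gcd of the windows is the constant factor.  For odd k, a common divisor of
   the first two windows divides both P_k and 2, and P_k is odd. *)
From mathcomp Require Import all_boot zify.

Set Implicit Arguments.
Unset Strict Implicit.
Unset Printing Implicit Defensive.

Definition pell_rec (u : nat -> nat) : Prop := forall n, u n.+2 = 2 * u n.+1 + u n.

Lemma pell_rec_pell : pell_rec pell. Proof. by []. Qed.

Lemma pell_rec_apell : pell_rec apell. Proof. by []. Qed.

Lemma pell_rec_eq u v : pell_rec u -> pell_rec v -> u 0 = v 0 -> u 1 = v 1 -> u =1 v.
Proof.
move=> recu recv u0 u1.
suff uv n : u n = v n /\ u n.+1 = v n.+1 by move=> n; case: (uv n).
elim: n => [|n [uvn uvn1]] //; by rewrite recu recv uvn uvn1.
Qed.

Lemma pellS n : pell n.+1 = pell n + apell n.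
Proof.
move: n; apply: (pell_rec_eq (u := fun n => pell n.+1)
  (v := fun n => pell n + apell n)) => // n.
rewrite pell_rec_pell pell_rec_apell; lia.
Qed.

Lemma apellS n : apell n.+1 = apell n + 2 * pell n.
Proof.
move: n; apply: (pell_rec_eq (u := fun n => apell n.+1)
  (v := fun n => apell n + 2 * pell n)) => // n.
rewrite pell_rec_pell pell_rec_apell; lia.
Qed.

Lemma pellD a b : pell (a + b) = pell a * apell b + apell a * pell b.
Proof.
move: a; apply: (pell_rec_eq (u := fun a => pell (a + b))
  (v := fun a => pell a * apell b + apell a * pell b)) => [a|a||].
- exact: pell_rec_pell.
- cbv beta; rewrite pell_rec_pell pell_rec_apell; lia.
- by rewrite mul1n.
- by rewrite add1n pellS /= !mul1n addnC.
Qed.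

Lemma apellD a b : apell (a + b) = apell a * apell b + 2 * pell a * pell b.
Proof.
move: a; apply: (pell_rec_eq (u := fun a => apell (a + b))
  (v := fun a => apell a * apell b + 2 * pell a * pell b)) => [a|a||].
- exact: pell_rec_apell.
- cbv beta; rewrite pell_rec_pell pell_rec_apell; lia.
- by rewrite /= mul1n muln0 addn0.
- by rewrite add1n apellS /= mul1n muln1.
Qed.

Lemma apell_sqr n : apell n ^ 2 + odd n = 2 * pell n ^ 2 + ~~ odd n.
Proof.
elim: n => [|n IHn] //; rewrite pellS apellS /=.
by case: (odd n) IHn => /= IHn; nia.
Qed.

Lemma odd_apell n : odd (apell n).
Proof. by elim: n => [|n IHn] //; rewrite apellS oddD oddM IHn. Qed.

Lemma odd_pell n : odd (pell n) = odd n.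
Proof. by elim: n => [|n IHn] //; rewrite pellS oddD IHn odd_apell addbT. Qed.

Lemma coprime_pellS n : coprime (pell n) (pell n.+1).
Proof.
elim: n => [|n IHn] //.
by rewrite /coprime pell_rec_pell gcdnMDl gcdnC.
Qed.

Lemma coprime_apellS n : coprime (apell n) (apell n.+1).
Proof.
elim: n => [|n IHn] //.
by rewrite /coprime pell_rec_apell gcdnMDl gcdnC.
Qed.

Lemma pell_add_double_even m h :
  ~~ odd h -> pell (m + 2 * h) = pell m + 2 * pell h * apell (m + h).
Proof.
move=> h_even; have := apell_sqr h; rewrite (negbTE h_even) /= => sqr_h.
rewrite mul2n -addnn !pellD !apellD; nia.
Qed.

Lemma pell_add_double_odd m h :
  odd h -> pell (m + 2 * h) = pell m + 2 * apell h * pell (m + h).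
Proof.
move=> h_odd; have := apell_sqr h; rewrite h_odd /= => sqr_h.
rewrite mul2n -addnn !pellD !apellD; nia.
Qed.

Lemma apell_window_add_pell k n : apell_window k n + pell n.+1 = pell (n.+1 + k).
Proof.
elim: k => [|k IHk]; first by rewrite /apell_window big_geq ?addn0.
rewrite /apell_window big_nat_recr // -/(apell_window k n).
by rewrite [n.+1 + _]addnS (pellS (n.+1 + k)) -IHk addSnnS addnAC.
Qed.

Lemma apell_window_double_even h n :
  ~~ odd h -> apell_window (2 * h) n = 2 * pell h * apell (n + h.+1).
Proof.
move=> h_even; apply: (@addIn (pell n.+1)).
by rewrite apell_window_add_pell pell_add_double_even // addSnnS addnC.
Qed.

Lemma apell_window_double_odd h n :
  odd h -> apell_window (2 * h) n = 2 * apell h * pell (n + h.+1).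
Proof.
move=> h_odd; apply: (@addIn (pell n.+1)).
by rewrite apell_window_add_pell pell_add_double_odd // addSnnS addnC.
Qed.

Lemma is_gcd_family_scaled d g c f :
  (forall n, f n = d * g (n + c)) -> (forall n, coprime (g n) (g n.+1)) ->
  is_gcd_family d f.
Proof.
move=> fE coprime_g; split=> [n|e e_dvd]; first by rewrite fE dvdn_mulr.
have : e %| gcdn (f 0) (f 1) by rewrite dvdn_gcd !e_dvd.
by rewrite !fE -muln_gcdr add0n add1n (eqP (coprime_g c)) muln1.
Qed.

Lemma is_gcd_family_apell_window_odd k : odd k -> is_gcd_family 1 (apell_window k).
Proof.
move=> k_odd; split=> [n|e e_dvd]; first exact: dvd1n.
set x := apell_window k 0; set P := pell k; set Q := apell k.
have x1E : x + 1 = pell k.+1 by rewrite apell_window_add_pell add1n.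
have yE : apell_window k 1 = 2 * x + P.
  by have := apell_window_add_pell k 1; rewrite add2n (pell_rec_pell k) -x1E /=; lia.
rewrite pellS -/P -/Q in x1E.
have e_dvdP : e %| P by move: (e_dvd 1); rewrite yE dvdn_addr // dvdn_mull // e_dvd.
(* Q^2 + 1 = 2 P^2 and Q = x + 1 - P combine to x (x + 2) + 2 = P (3 P + 2 Q). *)
have e_dvd2 : e %| 2.
  have sqr_k := apell_sqr k; rewrite k_odd /= -/P -/Q in sqr_k.
  have idE : x * (x + 2) + 2 = P * (3 * P + 2 * Q) by nia.
  by rewrite -(dvdn_addr 2 (dvdn_mulr (x + 2) (e_dvd 0))) idE dvdn_mulr.
have : e %| gcdn 2 P by rewrite dvdn_gcd e_dvd2 e_dvdP.
by rewrite (eqP (_ : coprime 2 P)) // coprime2n odd_pell.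
Qed.

Theorem theorem16 (k : nat) : 1 <= k ->
  is_gcd_family
    (if k %% 4 == 0 then 2 * pell (k %/ 2)
     else if k %% 4 == 2 then 2 * apell (k %/ 2)
     else 1)
    (apell_window k).
Proof.
move=> _; have := divn_eq k 4; have := ltn_mod k 4.
set j := k %/ 4; case: (k %% 4) => [|[|[|[|?]]]] // _ kE /=.
- have -> : k %/ 2 = 2 * j by lia.
  have -> : k = 2 * (2 * j) by lia.
  apply: (is_gcd_family_scaled (c := (2 * j).+1)) coprime_apellS => n.
  by rewrite apell_window_double_even // oddM.
- by apply: is_gcd_family_apell_window_odd; rewrite kE oddD oddM andbF.
- have -> : k %/ 2 = 2 * j + 1 by lia.
  have -> : k = 2 * (2 * j + 1) by lia.
  apply: (is_gcd_family_scaled (c := (2 * j + 1).+1)) coprime_pellS => n.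
  by rewrite apell_window_double_odd // addn1 /= oddM.
- by apply: is_gcd_family_apell_window_odd; rewrite kE oddD oddM andbF.
Qed.
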